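(* For every integer $n>2$ there exists a cake-cutting instance with $n$ players and an envy-free partial connected division $y$ such that, for every envy-free complete connected division $x$ of that instance, there are $n-2$ players $i$ with $u_i(y,i)=2\,u_i(x,i)$ (with $u_i(x,i)>0$), and the remaining two players $i$ satisfy $u_i(y,i)\ge u_i(x,i)$.
   Context: A cake is the interval $[0,1]$. There are $n$ players; each player $i$ has a valuation $v_i$, a nonatomic probability measure on $[0,1]$. A (connected) division $x$ is a sequence $(X_1,\dots,X_n)$ of pairwise disjoint open intervals of $[0,1]$ (possibly empty), $X_i$ being the piece of player $i$; it is complete if the union of the closures of the $X_i$ equals $[0,1]$, and partial otherwise. Write $u_i(x,j)=v_i(X_j)$. $x$ is envy-free if $u_i(x,i)\ge u_i(x,j)$ for all $i,j$. *)

From Stdlib Require Import Reals Lra List.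
Open Scope R_scope.

(* A valuation (nonatomic probability measure on [0,1]) is represented by its
   cumulative distribution function F(t) = v([0,t]); nonatomic <-> F continuous.
   Then v((a,b)) = F b - F a. *)
Definition is_valuation (F : R -> R) : Prop :=
  continuity F /\
  (forall s t, s <= t -> F s <= F t) /\
  (forall t, t <= 0 -> F t = 0) /\
  (forall t, 1 <= t -> F t = 1).

Definition meas (F : R -> R) (I : R * R) : R := F (snd I) - F (fst I).

(* Open interval (a,b) with 0 <= a <= b <= 1 (empty iff a = b). *)
Definition good_interval (I : R * R) : Prop :=
  0 <= fst I /\ fst I <= snd I /\ snd I <= 1.

Definition in_open (I : R * R) (t : R) : Prop := fst I < t /\ t < snd I.

Definition is_division (n : nat) (X : nat -> R * R) : Prop :=
  (forall i, (i < n)%nat -> good_interval (X i)) /\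
  (forall i j, (i < n)%nat -> (j < n)%nat -> i <> j ->
     forall t, ~ (in_open (X i) t /\ in_open (X j) t)).

(* Closure of a nonempty open interval (a,b) is [a,b]; of an empty one, empty. *)
Definition in_closure (I : R * R) (t : R) : Prop :=
  fst I < snd I /\ fst I <= t /\ t <= snd I.

Definition is_complete (n : nat) (X : nat -> R * R) : Prop :=
  forall t, 0 <= t <= 1 -> exists i, (i < n)%nat /\ in_closure (X i) t.

Definition util (v : nat -> R -> R) (X : nat -> R * R) (i j : nat) : R :=
  meas (v i) (X j).

Definition envy_free (n : nat) (v : nat -> R -> R) (X : nat -> R * R) : Prop :=
  forall i j, (i < n)%nat -> (j < n)%nat -> util v X i i >= util v X i j.

(* The instance lays a grid of [n] slots of width [w = 1/n] on the cake.  Player [n-1] is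
   uniform, so in an envy-free complete division every piece is at most as long as hers; a
   dented valuation for player [n-2] and the spike players rule out a long last piece, so all
   [n] pieces have length exactly [w] and, tiling [[0,1]], are the slots themselves.  Each of
   the other [n-2] players values only a short window around a grid point, which is then an
   endpoint of two slots: the player gets exactly half of her value in [x], whereas the
   partial division [y] gives her the whole window.  Players [n-2] and [n-1] get [w] both in
   [x] and in [y]. *)

From Stdlib Require Import Reals Lra Lia List Wf_nat ZArith.
Open Scope R_scope.

Lemma continuity_pt_lipschitz (f : R -> R) (K x0 : R) :
  0 < K -> (forall x y, Rabs (f x - f y) <= K * Rabs (x - y)) -> continuity_pt f x0.
Proof.
  intros HK Hlip eps Heps. exists (eps / K). split.
  - apply Rdiv_lt_0_compat; lra.
  - intros x [_ Hx]. simpl in *. unfold Rdist in *.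
    apply (Rle_lt_trans _ _ _ (Hlip x x0)).
    replace eps with (K * (eps / K)) by (field; lra).
    apply Rmult_lt_compat_l; lra.
Qed.

Lemma Rmin_lipschitz b x y : Rabs (Rmin b x - Rmin b y) <= Rabs (x - y).
Proof. unfold Rmin; do 2 destruct Rle_dec; unfold Rabs; repeat destruct Rcase_abs; lra. Qed.

Lemma Rmax_lipschitz b x y : Rabs (Rmax b x - Rmax b y) <= Rabs (x - y).
Proof. unfold Rmax; do 2 destruct Rle_dec; unfold Rabs; repeat destruct Rcase_abs; lra. Qed.

Lemma continuity_Rmin_l b : continuity (Rmin b).
Proof.
  intros x. apply (continuity_pt_lipschitz _ 1); [lra|].
  intros; rewrite Rmult_1_l; apply Rmin_lipschitz.
Qed.

Definition ramp (a b t : R) : R := Rmin 1 (Rmax 0 ((t - a) / (b - a))).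

Lemma ramp_range a b t : 0 <= ramp a b t <= 1.
Proof. unfold ramp, Rmin, Rmax. repeat destruct Rle_dec; lra. Qed.

Section Ramp.
Variables a b : R.
Hypothesis ab : a < b.

Lemma ramp_div_le s t : s <= t -> (s - a) / (b - a) <= (t - a) / (b - a).
Proof. intros Hst. apply Rmult_le_compat_r; [apply Rlt_le, Rinv_0_lt_compat|]; lra. Qed.

Lemma ramp_left t : t <= a -> ramp a b t = 0.
Proof.
  intros Ht. pose proof (ramp_div_le t a Ht) as Hle.
  replace ((a - a) / (b - a)) with 0 in Hle by (field; lra).
  unfold ramp. rewrite Rmax_left, Rmin_right; lra.
Qed.

Lemma ramp_right t : b <= t -> ramp a b t = 1.
Proof.
  intros Ht. pose proof (ramp_div_le b t Ht) as Hle.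
  replace ((b - a) / (b - a)) with 1 in Hle by (field; lra).
  unfold ramp. rewrite Rmax_right, Rmin_left; lra.
Qed.

Lemma ramp_mid t : a <= t <= b -> ramp a b t = (t - a) / (b - a).
Proof.
  intros [Hat Htb].
  pose proof (ramp_div_le a t Hat) as Hlo. pose proof (ramp_div_le t b Htb) as Hhi.
  replace ((a - a) / (b - a)) with 0 in Hlo by (field; lra).
  replace ((b - a) / (b - a)) with 1 in Hhi by (field; lra).
  unfold ramp. rewrite Rmax_right, Rmin_right; lra.
Qed.

Lemma ramp_mono s t : s <= t -> ramp a b s <= ramp a b t.
Proof.
  intros Hst. pose proof (ramp_div_le s t Hst).
  unfold ramp, Rmin, Rmax. repeat destruct Rle_dec; lra.
Qed.

Lemma ramp_continuity : continuity (ramp a b).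
Proof.
  intros x. apply (continuity_pt_lipschitz _ (/ (b - a))); [apply Rinv_0_lt_compat; lra|].
  intros s t. unfold ramp.
  eapply Rle_trans; [apply Rmin_lipschitz|]. eapply Rle_trans; [apply Rmax_lipschitz|].
  replace ((s - a) / (b - a) - (t - a) / (b - a)) with (/ (b - a) * (s - t)) by (field; lra).
  rewrite Rabs_mult, (Rabs_right (/ (b - a))); [lra|].
  apply Rle_ge, Rlt_le, Rinv_0_lt_compat; lra.
Qed.

Lemma ramp_lt_half t : t < (a + b) / 2 -> ramp a b t < 1 / 2.
Proof.
  intros Ht. destruct (Rle_dec t a); [rewrite ramp_left; lra|].
  rewrite ramp_mid by lra. apply Rmult_lt_reg_r with (b - a); [lra|].
  field_simplify; lra.
Qed.

Lemma ramp_gt_half t : (a + b) / 2 < t -> 1 / 2 < ramp a b t.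
Proof.
  intros Ht. destruct (Rle_dec b t); [rewrite ramp_right; lra|].
  rewrite ramp_mid by lra. apply Rmult_lt_reg_r with (b - a); [lra|].
  field_simplify; lra.
Qed.

Lemma ramp_half : ramp a b ((a + b) / 2) = 1 / 2.
Proof. rewrite ramp_mid by lra. field; lra. Qed.

End Ramp.

Lemma ramp_valuation a b : 0 <= a -> a < b -> b <= 1 -> is_valuation (ramp a b).
Proof.
  intros Ha Hab Hb. split; [now apply ramp_continuity|]. split; [intros; now apply ramp_mono|].
  split; intros; [apply ramp_left | apply ramp_right]; lra.
Qed.

Definition disjoint (I J : R * R) : Prop := forall t, ~ (in_open I t /\ in_open J t).

Lemma disjoint_sym I J : disjoint I J -> disjoint J I.
Proof. intros H t [HI HJ]. exact (H t (conj HJ HI)). Qed.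

Lemma ordered_disjoint I J : snd I <= fst J -> disjoint I J.
Proof. unfold disjoint, in_open. intros H t. lra. Qed.

Lemma disjoint_cases I J : good_interval J -> fst I < snd I -> disjoint I J ->
  snd J <= fst I \/ snd I <= fst J \/ fst J = snd J.
Proof.
  destruct I as [a b], J as [a' b']; unfold good_interval, disjoint, in_open; simpl.
  intros [_ [Hab' _]] Hab Hd.
  destruct (Rle_dec b' a); [now left|]. destruct (Rle_dec b a'); [now right; left|].
  destruct (Req_dec a' b'); [now right; right|]. exfalso.
  apply (Hd ((Rmax a a' + Rmin b b') / 2)).
  unfold Rmax, Rmin; repeat destruct Rle_dec; lra.
Qed.

Lemma valuation_range F t : is_valuation F -> 0 <= F t <= 1.
Proof.
  intros [_ [Hmono [H0 H1]]]. split.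
  - rewrite <- (H0 (Rmin t 0)) by apply Rmin_r. apply Hmono, Rmin_l.
  - rewrite <- (H1 (Rmax t 1)) by apply Rmax_r. apply Hmono, Rmax_l.
Qed.

Lemma meas_nonneg F I : is_valuation F -> fst I <= snd I -> 0 <= meas F I.
Proof. intros [_ [Hmono _]] HI. unfold meas. pose proof (Hmono _ _ HI). lra. Qed.

Lemma meas_disjoint_le1 F I J : is_valuation F -> good_interval I -> good_interval J ->
  disjoint I J -> meas F I + meas F J <= 1.
Proof.
  intros HF HI HJ Hd. pose proof HF as [_ [Hmono _]].
  pose proof (meas_nonneg F I HF (proj1 (proj2 HI))).
  pose proof (meas_nonneg F J HF (proj1 (proj2 HJ))).
  pose proof (valuation_range F (fst I) HF). pose proof (valuation_range F (snd I) HF).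
  pose proof (valuation_range F (fst J) HF). pose proof (valuation_range F (snd J) HF).
  unfold meas in *. destruct (Req_dec (fst I) (snd I)) as [E|E]; [rewrite E; lra|].
  assert (Hlt : fst I < snd I) by (unfold good_interval in HI; lra).
  destruct (disjoint_cases I J HJ Hlt Hd) as [C|[C|C]].
  - pose proof (Hmono _ _ C). lra.
  - pose proof (Hmono _ _ C). lra.
  - rewrite C. lra.
Qed.

Fixpoint lsum (g : R * R -> R) (l : list (R * R)) : R :=
  match l with nil => 0 | K :: l' => g K + lsum g l' end.

Lemma lsum_app g l1 l2 : lsum g (l1 ++ l2) = lsum g l1 + lsum g l2.
Proof. induction l1; simpl; lra. Qed.

Lemma lsum_ext g h l : (forall I, In I l -> g I = h I) -> lsum g l = lsum h l.
Proof. induction l as [|I l IH]; simpl; intros H; auto. rewrite H, IH; auto. Qed.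

Lemma lsum_le g l M : (forall I, In I l -> g I <= M) -> lsum g l <= INR (length l) * M.
Proof.
  induction l as [|I l IH]; cbn [lsum length In]; intros H; [simpl; lra|].
  rewrite S_INR. pose proof (H I (or_introl eq_refl)).
  pose proof (IH (fun J HJ => H J (or_intror HJ))). lra.
Qed.

Lemma lsum_lt g l M : (forall I, In I l -> g I <= M) -> (exists I, In I l /\ g I < M) ->
  lsum g l < INR (length l) * M.
Proof.
  induction l as [|I l IH]; cbn [lsum length In]; intros H [J [HJ Hlt]]; [destruct HJ|].
  rewrite S_INR. destruct HJ as [<-|HJ].
  - pose proof (lsum_le g l M (fun K HK => H K (or_intror HK))). lra.
  - pose proof (H I (or_introl eq_refl)).
    pose proof (IH (fun K HK => H K (or_intror HK)) (ex_intro _ J (conj HJ Hlt))). lra.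
Qed.

Lemma lsum_multiple g l w : (forall I, In I l -> g I = 0 \/ g I = w) ->
  exists m, lsum g l = INR m * w.
Proof.
  induction l as [|I l IH]; simpl; intros H; [exists 0%nat; simpl; lra|].
  destruct (IH (fun J HJ => H J (or_intror HJ))) as [m Hm].
  destruct (H I (or_introl eq_refl)) as [E|E]; [exists m | exists (S m); rewrite S_INR]; lra.
Qed.

Lemma ForallOrdPairs_remove {A} (P : A -> A -> Prop) l1 a l2 :
  (forall x y, P x y -> P y x) -> ForallOrdPairs P (l1 ++ a :: l2) ->
  (forall b, In b (l1 ++ l2) -> P a b) /\ ForallOrdPairs P (l1 ++ l2).
Proof.
  intros Psym. induction l1 as [|b l1 IH]; simpl; intros Hl; inversion_clear Hl as [|? ? Hb Hl'].
  - split; [now apply Forall_forall|assumption].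
  - rewrite Forall_forall in Hb. destruct (IH Hl') as [Ha Hrest]. split.
    + intros c [<-|Hc]; [apply Psym, Hb, in_or_app; simpl; auto | auto].
    + constructor; [|assumption]. apply Forall_forall. intros c Hc. apply Hb.
      apply in_app_or in Hc as [Hc|Hc]; apply in_or_app; simpl; auto.
Qed.

Definition meas_upto (F : R -> R) (c : R) (I : R * R) : R :=
  F (Rmin (snd I) c) - F (Rmin (fst I) c).

Lemma lsum_meas_upto_continuity F l x :
  continuity F -> continuity_pt (fun c => lsum (meas_upto F c) l) x.
Proof.
  intros HF. induction l as [|J l IH]; simpl.
  - apply continuity_pt_const. now intros ? ?.
  - apply (continuity_pt_plus (fun c => meas_upto F c J)); [|assumption].
    apply (continuity_pt_minus (fun c => F (Rmin (snd J) c)) (fun c => F (Rmin (fst J) c)));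
      apply (continuity_pt_comp (Rmin _) F); (apply continuity_Rmin_l || apply HF).
Qed.

Lemma meas_upto_disjoint F I J a c : good_interval J -> fst I < snd I -> disjoint I J ->
  fst I <= a <= c -> c <= snd I -> meas_upto F c J = meas_upto F a J.
Proof.
  intros HJ HI Hd Ha Hc. pose proof HJ as [_ [HJle _]]. unfold meas_upto.
  destruct (disjoint_cases I J HJ HI Hd) as [C|[C|C]].
  - rewrite !Rmin_left by lra. reflexivity.
  - rewrite !Rmin_right by lra. ring.
  - rewrite C. ring.
Qed.

Lemma lsum_meas_upto_zero F l : (forall I, In I l -> good_interval I) ->
  lsum (meas_upto F 0) l = 0.
Proof.
  induction l as [|J l IH]; simpl; intros Hgood; [reflexivity|].
  destruct (Hgood J (or_introl eq_refl)) as [HJ0 [HJle _]].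
  rewrite IH by auto. unfold meas_upto. rewrite !Rmin_right by lra. ring.
Qed.

Lemma continuity_pt_zero_left h a : 0 < a -> continuity_pt h a ->
  (forall c, 0 <= c < a -> h c = 0) -> h a = 0.
Proof.
  intros Ha Hcont Hzero. destruct (Req_dec (h a) 0) as [E|E]; [assumption|exfalso].
  destruct (Hcont (Rabs (h a)) (Rabs_pos_lt _ E)) as [alp [Halp Hnear]].
  set (c := a - Rmin alp a / 2).
  assert (0 < Rmin alp a <= alp) by (split; [apply Rmin_pos|apply Rmin_l]; lra).
  pose proof (Rmin_r alp a).
  specialize (Hnear c). simpl in Hnear. unfold Rdist in Hnear.
  rewrite (Hzero c), Rminus_0_l, Rabs_Ropp in Hnear by (unfold c; lra).
  apply (Rlt_irrefl (Rabs (h a))), Hnear. split; [split; [exact I|unfold c; lra]|].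
  unfold c. replace (a - Rmin alp a / 2 - a) with (- (Rmin alp a / 2)) by ring.
  rewrite Rabs_Ropp, Rabs_right; lra.
Qed.

(* The point [c] lies in some piece [I]; the others cover [[0, c')] for every [c' < fst I],
   and continuity of [F] passes from these [c'] to [fst I]. *)
Lemma lsum_meas_upto_cover F l c : is_valuation F ->
  (forall I, In I l -> good_interval I) -> ForallOrdPairs disjoint l -> 0 <= c ->
  (forall t, 0 <= t <= c -> exists I, In I l /\ in_closure I t) ->
  lsum (meas_upto F c) l = F c.
Proof.
  intros HF. pose proof HF as [HFcont [_ [HF0 _]]].
  remember (length l) as k eqn:Hk. revert l Hk c.
  induction k as [k IH] using lt_wf_ind. intros l -> c Hgood Hpd Hc Hcov.
  destruct (Hcov c) as [I [HI [HIne [HIc HcI]]]]; [lra|].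
  destruct (in_split I l HI) as [l1 [l2 ->]].
  destruct (ForallOrdPairs_remove _ _ _ _ disjoint_sym Hpd) as [Hd Hpd'].
  assert (Hgood' : forall J, In J (l1 ++ l2) -> good_interval J).
  { intros J HJ. apply Hgood, in_or_app. apply in_app_or in HJ as [HJ|HJ]; simpl; auto. }
  pose proof (Hgood I HI) as [HI0 _].
  assert (Hshift : lsum (meas_upto F c) (l1 ++ l2) = lsum (meas_upto F (fst I)) (l1 ++ l2)).
  { apply lsum_ext. intros J HJ. apply (meas_upto_disjoint F I J); auto; lra. }
  assert (Hrest : lsum (meas_upto F (fst I)) (l1 ++ l2) = F (fst I)).
  { destruct (Req_dec (fst I) 0) as [Z|Z].
    - rewrite Z, HF0 by lra. now apply lsum_meas_upto_zero.
    - enough (lsum (meas_upto F (fst I)) (l1 ++ l2) - F (fst I) = 0) by lra.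
      apply (continuity_pt_zero_left (fun c => lsum (meas_upto F c) (l1 ++ l2) - F c)); [lra| |].
      + apply continuity_pt_minus; auto using lsum_meas_upto_continuity.
      + intros c' Hc'. rewrite (IH (length (l1 ++ l2))); auto; try lra.
        * rewrite !length_app; simpl; lia.
        * intros t Ht. destruct (Hcov t) as [J [HJ HtJ]]; [lra|].
          apply in_app_or in HJ as [HJ|[<-|HJ]].
          -- exists J. auto using in_or_app.
          -- destruct HtJ as [_ [HtJ _]]. lra.
          -- exists J. auto using in_or_app. }
  assert (HIcut : meas_upto F c I = F c - F (fst I)).
  { unfold meas_upto. rewrite (Rmin_right (snd I)), (Rmin_left (fst I)) by lra. reflexivity. }
  rewrite !lsum_app in *. cbn [lsum]. lra.
Qed.

Definition pieces (n : nat) (x : nat -> R * R) : list (R * R) := map x (seq 0 n).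

Lemma In_pieces n x J : In J (pieces n x) <-> exists i, (i < n)%nat /\ J = x i.
Proof.
  unfold pieces. rewrite in_map_iff. split.
  - intros [i [<- Hi]]. apply in_seq in Hi. exists i. split; [lia|reflexivity].
  - intros [i [Hi ->]]. exists i. split; [reflexivity|]. apply in_seq. lia.
Qed.

Lemma length_pieces n x : length (pieces n x) = n.
Proof. unfold pieces. now rewrite length_map, length_seq. Qed.

Lemma division_pieces_good n x : is_division n x ->
  forall J, In J (pieces n x) -> good_interval J.
Proof. intros [Hgood _] J HJ. apply In_pieces in HJ as [i [Hi ->]]. auto. Qed.

Lemma division_pieces_disjoint n x : is_division n x -> ForallOrdPairs disjoint (pieces n x).
Proof.
  intros [_ Hd]. unfold pieces.
  enough (forall s k, (s + k <= n)%nat -> ForallOrdPairs disjoint (map x (seq s k)))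
    by (apply H; lia).
  intros s k. revert s. induction k as [|k IH]; intros s Hsk; simpl; constructor.
  - apply Forall_forall. intros J HJ. apply in_map_iff in HJ as [j [<- Hj]].
    apply in_seq in Hj. intros t. apply Hd; lia.
  - apply IH. lia.
Qed.

Lemma complete_pieces_cover n x : is_complete n x ->
  forall t, 0 <= t <= 1 -> exists I, In I (pieces n x) /\ in_closure I t.
Proof.
  intros Hc t Ht. destruct (Hc t Ht) as [i [Hi Hti]].
  exists (x i). split; [apply In_pieces; eauto|assumption].
Qed.

Lemma complete_division_meas_sum F n x : is_valuation F -> is_division n x ->
  is_complete n x -> lsum (meas F) (pieces n x) = 1.
Proof.
  intros HF Hdiv Hc. pose proof HF as [_ [_ [_ HF1]]].
  rewrite <- (HF1 1) by lra.
  rewrite <- (lsum_meas_upto_cover F (pieces n x) 1 HF (division_pieces_good n x Hdiv)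
    (division_pieces_disjoint n x Hdiv) ltac:(lra) (complete_pieces_cover n x Hc)).
  apply lsum_ext. intros J HJ. destruct (division_pieces_good n x Hdiv J HJ) as [_ [HJle HJ1]].
  unfold meas_upto, meas. rewrite !Rmin_left by lra. reflexivity.
Qed.

Lemma nat_up r : 0 <= r -> exists m : nat, r < INR m <= r + 1.
Proof.
  intros Hr. destruct (archimed r) as [Hup1 Hup2].
  assert (Hz : (0 <= up r)%Z) by (apply le_IZR; lra).
  exists (Z.to_nat (up r)). rewrite INR_IZR_INZ, Z2Nat.id by exact Hz. lra.
Qed.

Section Instance.
Variable n : nat.
Hypothesis n_ge3 : (3 <= n)%nat.

Definition w : R := / INR n.

(* [pen] and [ult] are the left ends of the last two slots [[m w, (m+1) w]] of the grid. *)
Local Notation pen := (1 - 2 * w).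
Local Notation ult := (1 - w).
Local Notation radius := (w / 8).

Definition center (k : nat) : R := INR (S k) * w.

Definition spike (k : nat) : R -> R := ramp (center k - radius) (center k + radius).

(* Uniform, except that the mass of the penultimate slot is moved off its first [radius]. *)
Definition dented (t : R) : R :=
  pen * ramp 0 pen t + w * ramp (pen + radius) ult t + w * ramp ult 1 t.

Definition profile (i : nat) : R -> R :=
  if Nat.ltb i (n - 2) then spike i else if Nat.eqb i (n - 2) then dented else ramp 0 1.

Definition partial_division (i : nat) : R * R :=
  if Nat.ltb i (n - 2) then (center i - radius, center i + radius)
  else if Nat.eqb i (n - 2) then (pen + radius, ult) else (ult, 1).

Lemma INR_n_ge3 : 3 <= INR n.
Proof. replace 3 with (INR 3) by (simpl; ring). now apply le_INR. Qed.

Lemma w_pos : 0 < w.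
Proof. pose proof INR_n_ge3. unfold w. apply Rinv_0_lt_compat. lra. Qed.

Lemma w_le_third : w <= / 3.
Proof. pose proof INR_n_ge3. unfold w. apply Rinv_le_contravar; lra. Qed.

Lemma INR_n_w : INR n * w = 1.
Proof. pose proof INR_n_ge3. unfold w. field. lra. Qed.

Lemma grid_lt_inv a b : INR a * w < INR b * w -> (a < b)%nat.
Proof. intros H. apply INR_lt, Rmult_lt_reg_r with w; [apply w_pos|exact H]. Qed.

Lemma grid_le_inv a b : INR a * w <= INR b * w -> (a <= b)%nat.
Proof. intros H. apply INR_le, Rmult_le_reg_r with w; [apply w_pos|exact H]. Qed.

Lemma center_bounds k : (k < n - 2)%nat -> w <= center k <= pen.
Proof.
  intros Hk. pose proof w_pos. pose proof INR_n_w. unfold center.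
  assert (1 <= INR (S k)) by (replace 1 with (INR 1) by reflexivity; apply le_INR; lia).
  assert (INR (S k) <= INR n - 2).
  { replace 2 with (INR 2) by (simpl; ring). rewrite <- minus_INR by lia. apply le_INR; lia. }
  split; nra.
Qed.

Lemma center_lt i j : (i < j)%nat -> center i + w <= center j.
Proof.
  intros Hij. pose proof w_pos. unfold center.
  assert (INR (S i) + 1 <= INR (S j)) by (rewrite <- S_INR; apply le_INR; lia). nra.
Qed.

Section Spike.
Variable k : nat.

Lemma spike_window : center k - radius < center k + radius.
Proof. pose proof w_pos. lra. Qed.

Lemma spike_midpoint : (center k - radius + (center k + radius)) / 2 = center k.
Proof. field. Qed.

Lemma spike_valuation : (k < n - 2)%nat -> is_valuation (spike k).
Proof.
  intros Hk. pose proof w_pos. pose proof w_le_third. pose proof (center_bounds k Hk).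
  apply ramp_valuation; lra.
Qed.

Lemma spike_left t : t <= center k - radius -> spike k t = 0.
Proof. apply ramp_left, spike_window. Qed.

Lemma spike_right t : center k + radius <= t -> spike k t = 1.
Proof. apply ramp_right, spike_window. Qed.

Lemma spike_center : spike k (center k) = 1 / 2.
Proof.
  unfold spike. rewrite <- spike_midpoint at 3. apply ramp_half, spike_window.
Qed.

Lemma spike_lt_half t : t < center k -> spike k t < 1 / 2.
Proof. intros Ht. apply ramp_lt_half; [apply spike_window|]. now rewrite spike_midpoint. Qed.

Lemma spike_gt_half t : center k < t -> 1 / 2 < spike k t.
Proof. intros Ht. apply ramp_gt_half; [apply spike_window|]. now rewrite spike_midpoint. Qed.

Lemma spike_mono s t : s <= t -> spike k s <= spike k t.
Proof. apply ramp_mono, spike_window. Qed.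

End Spike.

Lemma dented_valuation : is_valuation dented.
Proof.
  pose proof w_pos. pose proof w_le_third.
  assert (Hpen : 0 < pen) by lra. assert (Hmid : pen + radius < ult) by lra.
  assert (Hult : ult < 1) by lra.
  unfold dented. split; [|split; [|split]].
  - intros x. repeat apply continuity_pt_plus; apply continuity_pt_scal; now apply ramp_continuity.
  - intros s t Hst.
    pose proof (ramp_mono 0 pen Hpen s t Hst). pose proof (ramp_mono _ _ Hmid s t Hst).
    pose proof (ramp_mono ult 1 Hult s t Hst). nra.
  - intros t Ht. rewrite !ramp_left; lra.
  - intros t Ht. rewrite !ramp_right; lra.
Qed.

Lemma dented_low t : 0 <= t <= pen -> dented t = t.
Proof.
  intros Ht. pose proof w_pos. pose proof w_le_third. unfold dented.
  rewrite ramp_mid, (ramp_left (pen + radius)), (ramp_left ult) by lra. field. lra.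
Qed.

Lemma dented_flat t : pen <= t <= pen + radius -> dented t = pen.
Proof.
  intros Ht. pose proof w_pos. pose proof w_le_third. unfold dented.
  rewrite ramp_right, (ramp_left (pen + radius)), (ramp_left ult) by lra. ring.
Qed.

Lemma dented_high t : ult <= t <= 1 -> dented t = t.
Proof.
  intros Ht. pose proof w_pos. pose proof w_le_third. unfold dented.
  rewrite ramp_right, (ramp_right (pen + radius)), (ramp_mid ult) by lra. field. lra.
Qed.

Lemma dented_le t : 0 <= t <= 1 -> dented t <= t.
Proof.
  intros Ht. pose proof w_pos. pose proof w_le_third.
  destruct (Rle_dec t pen); [rewrite dented_low; lra|].
  destruct (Rle_dec t (pen + radius)); [rewrite dented_flat; lra|].
  destruct (Rle_dec ult t); [rewrite dented_high; lra|].
  unfold dented. rewrite ramp_right, (ramp_mid (pen + radius)), (ramp_left ult) by lra.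
  apply Rmult_le_reg_r with (ult - (pen + radius)); [lra|]. field_simplify; nra.
Qed.

Lemma dented_grid m : (m <= n)%nat -> dented (INR m * w) = INR m * w.
Proof.
  intros Hm. pose proof w_pos. pose proof INR_n_w. pose proof (pos_INR m).
  assert (INR m <= INR n) by (apply le_INR; lia).
  destruct (Nat.le_gt_cases m (n - 2)).
  - apply dented_low.
    assert (INR m <= INR n - 2).
    { replace 2 with (INR 2) by (simpl; ring). rewrite <- minus_INR by lia. apply le_INR; lia. }
    nra.
  - apply dented_high.
    assert (INR n - 1 <= INR m).
    { replace 1 with (INR 1) by reflexivity. rewrite <- minus_INR by lia. apply le_INR; lia. }
    nra.
Qed.

Lemma uniform_id t : 0 <= t <= 1 -> ramp 0 1 t = t.
Proof. intros Ht. rewrite ramp_mid by lra. field. Qed.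

Lemma uniform_meas I : good_interval I -> meas (ramp 0 1) I = snd I - fst I.
Proof. intros [? [? ?]]. unfold meas. rewrite !uniform_id by lra. reflexivity. Qed.

Lemma profile_spike i : (i < n - 2)%nat -> profile i = spike i.
Proof. intros H. unfold profile. now rewrite (proj2 (Nat.ltb_lt _ _) H). Qed.

Lemma profile_pen : profile (n - 2) = dented.
Proof. unfold profile. now rewrite Nat.ltb_irrefl, Nat.eqb_refl. Qed.

Lemma profile_ult : profile (n - 1) = ramp 0 1.
Proof.
  unfold profile. rewrite (proj2 (Nat.ltb_ge _ _)), (proj2 (Nat.eqb_neq _ _)) by lia. reflexivity.
Qed.

Lemma partial_division_spike i : (i < n - 2)%nat ->
  partial_division i = (center i - radius, center i + radius).
Proof. intros H. unfold partial_division. now rewrite (proj2 (Nat.ltb_lt _ _) H). Qed.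

Lemma partial_division_pen : partial_division (n - 2) = (pen + radius, ult).
Proof. unfold partial_division. now rewrite Nat.ltb_irrefl, Nat.eqb_refl. Qed.

Lemma partial_division_ult : partial_division (n - 1) = (ult, 1).
Proof.
  unfold partial_division.
  rewrite (proj2 (Nat.ltb_ge _ _)), (proj2 (Nat.eqb_neq _ _)) by lia. reflexivity.
Qed.

Lemma profile_valuation i : (i < n)%nat -> is_valuation (profile i).
Proof.
  intros Hi. destruct (Nat.lt_ge_cases i (n - 2)) as [Hs|Hs].
  - rewrite profile_spike by exact Hs. now apply spike_valuation.
  - destruct (Nat.eq_dec i (n - 2)) as [->|Hne].
    + rewrite profile_pen. exact dented_valuation.
    + replace i with (n - 1)%nat by lia. rewrite profile_ult. apply ramp_valuation; lra.
Qed.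

Lemma partial_division_bounds i : (i < n)%nat ->
  good_interval (partial_division i) /\
  0 < fst (partial_division i) /\ snd (partial_division i) - fst (partial_division i) <= w.
Proof.
  intros Hi. pose proof w_pos. pose proof w_le_third. unfold good_interval.
  assert (Hcases : (i < n - 2)%nat \/ i = (n - 2)%nat \/ i = (n - 1)%nat) by lia.
  destruct Hcases as [Hs|[-> | ->]].
  - rewrite partial_division_spike by exact Hs. pose proof (center_bounds i Hs). simpl; lra.
  - rewrite partial_division_pen. simpl; lra.
  - rewrite partial_division_ult. simpl; lra.
Qed.

Lemma partial_division_ordered i j : (i < j)%nat -> (j < n)%nat ->
  snd (partial_division i) <= fst (partial_division j).
Proof.
  intros Hij Hj. pose proof w_pos.
  assert (Hcases : (j < n - 2)%nat \/ j = (n - 2)%nat \/ j = (n - 1)%nat) by lia.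
  destruct Hcases as [Ht | [-> | ->]].
  - rewrite !partial_division_spike by lia. simpl. pose proof (center_lt i j Hij). lra.
  - rewrite partial_division_spike, partial_division_pen by lia. simpl.
    pose proof (center_bounds i ltac:(lia)). lra.
  - rewrite partial_division_ult. simpl.
    destruct (Nat.lt_ge_cases i (n - 2)) as [Hs|Hs].
    + rewrite partial_division_spike by exact Hs. pose proof (center_bounds i Hs). simpl. lra.
    + replace i with (n - 2)%nat by lia. rewrite partial_division_pen. simpl. lra.
Qed.

Lemma partial_division_is_division : is_division n partial_division.
Proof.
  split; [intros i Hi; apply partial_division_bounds, Hi|].
  intros i j Hi Hj Hij. destruct (proj1 (Nat.lt_gt_cases i j) Hij) as [Hlt|Hlt].
  - now apply ordered_disjoint, partial_division_ordered.
  - apply disjoint_sym, ordered_disjoint, partial_division_ordered; assumption.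
Qed.

Lemma partial_division_incomplete : ~ is_complete n partial_division.
Proof.
  intros Hc. destruct (Hc 0) as [i [Hi [_ [H0 _]]]]; [lra|].
  pose proof (partial_division_bounds i Hi). lra.
Qed.

Lemma dented_meas_le I : 0 <= fst I <= pen -> fst I <= snd I <= 1 ->
  meas dented I <= snd I - fst I.
Proof.
  intros Ha Hb. unfold meas. rewrite (dented_low (fst I)) by lra.
  pose proof (dented_le (snd I)). pose proof w_pos. lra.
Qed.

Lemma partial_division_spike_value k : (k < n - 2)%nat ->
  util profile partial_division k k = 1.
Proof.
  intros Hk. pose proof w_pos. unfold util, meas.
  rewrite profile_spike, partial_division_spike by exact Hk. simpl.
  rewrite spike_right, spike_left by lra. ring.
Qed.

Lemma partial_division_pen_value : util profile partial_division (n - 2) (n - 2) = w.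
Proof.
  pose proof w_pos. pose proof w_le_third. unfold util, meas.
  rewrite profile_pen, partial_division_pen. simpl.
  rewrite dented_high, dented_flat by lra. ring.
Qed.

Lemma partial_division_ult_value : util profile partial_division (n - 1) (n - 1) = w.
Proof.
  pose proof w_pos. unfold util.
  rewrite profile_ult, uniform_meas, partial_division_ult by (apply partial_division_bounds; lia).
  simpl. ring.
Qed.

Lemma partial_division_envy_free : envy_free n profile partial_division.
Proof.
  intros i j Hi Hj. pose proof w_pos. pose proof w_le_third.
  destruct (partial_division_bounds j Hj) as [Hj_good [_ Hjw]].
  assert (Hcases : (i < n - 2)%nat \/ i = (n - 2)%nat \/ i = (n - 1)%nat) by lia.
  destruct Hcases as [Hs | [-> | ->]].
  - rewrite partial_division_spike_value by exact Hs. unfold util, meas.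
    pose proof (valuation_range _ (snd (partial_division j)) (profile_valuation i Hi)).
    pose proof (valuation_range _ (fst (partial_division j)) (profile_valuation i Hi)). lra.
  - assert (Hcases : (j < n - 2)%nat \/ j = (n - 2)%nat \/ j = (n - 1)%nat) by lia.
    destruct Hcases as [Ht | [-> | ->]]; [| apply Rge_refl |];
      rewrite partial_division_pen_value; unfold util; rewrite profile_pen.
    + rewrite partial_division_spike in * by exact Ht. pose proof (center_bounds j Ht).
      pose proof (dented_meas_le (center j - radius, center j + radius)). simpl in *. lra.
    + rewrite partial_division_ult. unfold meas; simpl. rewrite !dented_high by lra. lra.
  - rewrite partial_division_ult_value. unfold util.
    rewrite profile_ult, uniform_meas by exact Hj_good. lra.
Qed.

Lemma spike_meas_gt_half k X : 1 / 2 < meas (spike k) X -> fst X < center k < snd X.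
Proof.
  unfold meas. intros Hm.
  pose proof (ramp_range (center k - radius) (center k + radius) (fst X)).
  pose proof (ramp_range (center k - radius) (center k + radius) (snd X)).
  fold (spike k) in *. split.
  - destruct (Rlt_le_dec (fst X) (center k)) as [L|L]; [exact L|].
    pose proof (spike_mono k _ _ L). rewrite spike_center in *. lra.
  - destruct (Rlt_le_dec (center k) (snd X)) as [L|L]; [exact L|].
    pose proof (spike_mono k _ _ L). rewrite spike_center in *. lra.
Qed.

Lemma spike_meas_le_half k X : meas (spike k) X <= 1 / 2 -> fst X < center k < snd X ->
  center k - radius < fst X /\ snd X < center k + radius.
Proof.
  unfold meas. intros Hm [H1 H2]. split.
  - destruct (Rlt_le_dec (center k - radius) (fst X)) as [L|L]; [exact L|].
    rewrite (spike_left k _ L) in Hm. pose proof (spike_gt_half k _ H2). lra.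
  - destruct (Rlt_le_dec (snd X) (center k + radius)) as [L|L]; [exact L|].
    rewrite (spike_right k _ L) in Hm. pose proof (spike_lt_half k _ H1). lra.
Qed.

Lemma center_inside X : 0 <= fst X < pen -> w < snd X - fst X ->
  exists k, (k < n - 2)%nat /\ fst X < center k < snd X.
Proof.
  intros HX Hlen. pose proof w_pos. pose proof INR_n_w. pose proof (pos_INR n).
  destruct (nat_up (fst X * INR n)) as [m [Hm1 Hm2]]; [nra|].
  assert (Hgrid1 : fst X < INR m * w) by nra.
  assert (Hgrid2 : INR m * w <= fst X + w).
  { replace (fst X + w) with ((fst X * INR n + 1) * w)
      by (rewrite Rmult_plus_distr_r, Rmult_assoc, INR_n_w; ring).
    apply Rmult_le_compat_r; lra. }
  assert (Hm : (0 < m)%nat).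
  { assert (0 <= fst X * INR n) by (apply Rmult_le_pos; lra). apply INR_lt. simpl. lra. }
  assert (Hmn : (m < n - 1)%nat).
  { apply grid_lt_inv. rewrite minus_INR by lia.
    replace ((INR n - INR 1) * w) with (1 - w)
      by (rewrite Rmult_minus_distr_r, INR_n_w; simpl; ring).
    lra. }
  exists (m - 1)%nat. split; [lia|]. unfold center. replace (S (m - 1)) with m by lia. lra.
Qed.

(* A longer piece would contain a centre strictly inside, and then lie within its spike window. *)
Lemma short_left_piece X : good_interval X -> fst X < pen ->
  (forall k, (k < n - 2)%nat -> meas (spike k) X <= 1 / 2) -> snd X - fst X <= w.
Proof.
  intros [HX0 _] Hpen Hspikes. destruct (Rle_lt_dec (snd X - fst X) w) as [|Hlen]; [assumption|].
  destruct (center_inside X ltac:(lra) Hlen) as [k [Hk Hin]].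
  destruct (spike_meas_le_half k X (Hspikes k Hk) Hin). pose proof w_pos. lra.
Qed.

Lemma long_piece_straddles_ult X : good_interval X -> w < snd X - fst X ->
  (forall k, (k < n - 2)%nat -> meas (spike k) X <= 1 / 2) ->
  fst X < ult < snd X.
Proof.
  intros HX Hlen Hspikes. pose proof HX as [_ [_ HX1]].
  destruct (Rlt_le_dec (fst X) pen) as [Hpen|Hpen].
  - pose proof (short_left_piece X HX Hpen Hspikes). lra.
  - lra.
Qed.

Lemma dented_large_straddles_ult X : good_interval X -> w < meas dented X ->
  (forall k, (k < n - 2)%nat -> meas (spike k) X <= 1 / 2) ->
  fst X < ult < snd X.
Proof.
  intros HX Hm Hspikes. pose proof HX as [HX0 [HXle HX1]]. pose proof w_pos. pose proof w_le_third.
  pose proof dented_valuation as [_ [Hmono _]].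
  split.
  - destruct (Rlt_le_dec (fst X) ult) as [|Hult]; [assumption|].
    unfold meas in Hm. rewrite !dented_high in Hm by lra. lra.
  - destruct (Rlt_le_dec ult (snd X)) as [|Hult]; [assumption|].
    destruct (Rlt_le_dec (fst X) pen) as [Hpen|Hpen].
    + pose proof (short_left_piece X HX Hpen Hspikes).
      pose proof (dented_meas_le X ltac:(lra) ltac:(lra)). lra.
    + pose proof (Hmono _ _ Hult) as Hsnd. pose proof (Hmono _ _ Hpen) as Hfst.
      rewrite (dented_high ult) in Hsnd by lra. rewrite (dented_low pen) in Hfst by lra.
      unfold meas in Hm. lra.
Qed.

Section EnvyFreeComplete.
Variable x : nat -> R * R.
Hypothesis x_division : is_division n x.
Hypothesis x_envy_free : envy_free n profile x.

Lemma spike_other_piece_le_half k j : (k < n - 2)%nat -> (j < n)%nat -> j <> k ->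
  meas (spike k) (x j) <= 1 / 2.
Proof.
  intros Hk Hj Hjk. destruct x_division as [Hgood Hdisj].
  pose proof (x_envy_free k j ltac:(lia) Hj) as Hef. unfold util in Hef.
  rewrite profile_spike in Hef by exact Hk.
  pose proof (meas_disjoint_le1 (spike k) (x k) (x j) (spike_valuation k Hk)
    (Hgood k ltac:(lia)) (Hgood j Hj) (Hdisj k j ltac:(lia) Hj (not_eq_sym Hjk))). lra.
Qed.

Hypothesis x_complete : is_complete n x.

Lemma last_piece_short : snd (x (n - 1)) - fst (x (n - 1)) <= w.
Proof.
  destruct x_division as [Hgood Hdisj]. pose proof w_pos. pose proof w_le_third.
  destruct (Rle_lt_dec (snd (x (n - 1)) - fst (x (n - 1))) w) as [|Hlong]; [assumption|exfalso].
  assert (Hspikes : forall j, (n - 2 <= j < n)%nat ->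
    forall k, (k < n - 2)%nat -> meas (spike k) (x j) <= 1 / 2)
    by (intros; apply spike_other_piece_le_half; lia).
  pose proof (Hgood (n - 1)%nat ltac:(lia)) as Hult_good.
  destruct (long_piece_straddles_ult (x (n - 1)) Hult_good Hlong (Hspikes (n - 1)%nat ltac:(lia))).
  pose proof (x_envy_free (n - 2)%nat (n - 1)%nat ltac:(lia) ltac:(lia)) as Hef.
  unfold util in Hef. rewrite profile_pen in Hef.
  destruct (Rle_lt_dec (meas dented (x (n - 2)%nat)) w) as [Hsmall|Hlarge].
  - pose proof (dented_le (fst (x (n - 1)%nat))). destruct Hult_good as [? [? ?]].
    unfold meas in *. rewrite (dented_high (snd (x (n - 1)%nat))) in Hef by lra. lra.
  - destruct (dented_large_straddles_ult (x (n - 2)%nat) (Hgood (n - 2)%nat ltac:(lia)) Hlarge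
      (Hspikes (n - 2)%nat ltac:(lia))).
    apply (Hdisj (n - 2)%nat (n - 1)%nat ltac:(lia) ltac:(lia) ltac:(lia) ult). unfold in_open. lra.
Qed.

(* The uniform player bounds every piece by the last one, and the [n] lengths add up to
   [1 = n w]. *)
Lemma piece_length j : (j < n)%nat -> snd (x j) - fst (x j) = w.
Proof.
  intros Hj. destruct x_division as [Hgood _].
  assert (Hle : forall i, (i < n)%nat -> meas (ramp 0 1) (x i) <= w).
  { intros i Hi. pose proof (x_envy_free (n - 1)%nat i ltac:(lia) Hi) as Hef.
    unfold util in Hef. rewrite profile_ult, !uniform_meas in Hef by (apply Hgood; lia).
    rewrite uniform_meas by (apply Hgood; lia). pose proof last_piece_short. lra. }
  rewrite <- uniform_meas by (apply Hgood, Hj).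
  destruct (Rlt_le_dec (meas (ramp 0 1) (x j)) w) as [Hlt|Hge];
    [exfalso | pose proof (Hle j Hj); lra].
  pose proof (complete_division_meas_sum (ramp 0 1) n x ltac:(apply ramp_valuation; lra)
    x_division x_complete) as Hsum.
  pose proof (lsum_lt (meas (ramp 0 1)) (pieces n x) w) as Hlt_sum.
  rewrite length_pieces, INR_n_w in Hlt_sum.
  enough (lsum (meas (ramp 0 1)) (pieces n x) < 1) by lra.
  apply Hlt_sum.
  - intros J HJ. apply In_pieces in HJ as [i [Hi ->]]. auto.
  - exists (x j). split; [apply In_pieces; eauto|exact Hlt].
Qed.

Lemma meas_upto_piece j i : (j < n)%nat -> (i < n)%nat ->
  meas_upto (ramp 0 1) (fst (x j)) (x i) = 0 \/ meas_upto (ramp 0 1) (fst (x j)) (x i) = w.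
Proof.
  intros Hj Hi. destruct x_division as [Hgood Hdisj]. unfold meas_upto.
  pose proof (Hgood j Hj) as [Hj0 [Hjle Hj1]]. pose proof (piece_length j Hj). pose proof w_pos.
  destruct (Nat.eq_dec i j) as [->|Hij].
  - left. rewrite (Rmin_right (snd (x j))), Rmin_left by lra. ring.
  - pose proof (Hgood i Hi) as Hi_good. pose proof Hi_good as [Hi0 [Hile Hi1]].
    destruct (disjoint_cases (x j) (x i) Hi_good ltac:(lra)
      (fun t => Hdisj j i Hj Hi (not_eq_sym Hij) t)) as [C|[C|C]].
    + right. rewrite !Rmin_left by lra. rewrite !uniform_id by lra.
      rewrite <- (piece_length i Hi). reflexivity.
    + left. rewrite !Rmin_right by lra. ring.
    + left. rewrite C. ring.
Qed.

(* The pieces left of [x j] tile [[0, fst (x j)]] and each has length [w]. *)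
Lemma piece_on_grid j : (j < n)%nat -> exists m, fst (x j) = INR m * w.
Proof.
  intros Hj. pose proof (proj1 x_division j Hj) as [Hj0 [Hjle Hj1]].
  rewrite <- (uniform_id (fst (x j))) by lra.
  rewrite <- (lsum_meas_upto_cover (ramp 0 1) (pieces n x) (fst (x j))); auto.
  - apply lsum_multiple. intros J HJ. apply In_pieces in HJ as [i [Hi ->]].
    now apply meas_upto_piece.
  - apply ramp_valuation; lra.
  - exact (division_pieces_good n x x_division).
  - exact (division_pieces_disjoint n x x_division).
  - intros t Ht. apply (complete_pieces_cover n x x_complete). lra.
Qed.

Lemma piece_is_slot j : (j < n)%nat ->
  exists m, fst (x j) = INR m * w /\ snd (x j) = INR (S m) * w.
Proof.
  intros Hj. destruct (piece_on_grid j Hj) as [m Hm]. exists m.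
  pose proof (piece_length j Hj). rewrite S_INR. split; lra.
Qed.

Lemma spike_player_value k : (k < n - 2)%nat -> util profile x k k = 1 / 2.
Proof.
  intros Hk. pose proof w_pos. pose proof (center_bounds k Hk).
  unfold util. rewrite profile_spike by exact Hk. apply Rle_antisym.
  - destruct (Rle_lt_dec (meas (spike k) (x k)) (1 / 2)) as [|Hgt]; [assumption|exfalso].
    destruct (spike_meas_gt_half k (x k) Hgt) as [Hlo Hhi].
    destruct (piece_is_slot k ltac:(lia)) as [m [Hfst Hsnd]].
    unfold center in Hlo, Hhi. rewrite Hfst in Hlo. rewrite Hsnd in Hhi.
    apply grid_lt_inv in Hlo. apply grid_lt_inv in Hhi. lia.
  - destruct (x_complete (center k - w / 2)) as [i [Hi [_ [Hlo Hhi]]]]; [lra|].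
    destruct (piece_is_slot i Hi) as [m [Hfst Hsnd]].
    assert (m = k) as ->.
    { unfold center in Hlo, Hhi. rewrite S_INR in Hlo, Hhi.
      rewrite Hfst in Hlo. rewrite Hsnd in Hhi.
      assert (Hmk : (m < S k)%nat) by (apply grid_lt_inv; rewrite S_INR; lra).
      assert (Hkm : (k < S m)%nat) by (apply grid_lt_inv; rewrite S_INR in *; lra).
      lia. }
    pose proof (x_envy_free k i ltac:(lia) Hi) as Hef. unfold util in Hef.
    rewrite profile_spike in Hef by exact Hk. unfold meas at 2 in Hef.
    rewrite Hfst, Hsnd in Hef. fold (center k) in Hef.
    rewrite spike_center, spike_left in Hef; [lra|]. unfold center. rewrite S_INR. lra.
Qed.

Lemma pen_player_value : util profile x (n - 2) (n - 2) = w.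
Proof.
  unfold util. rewrite profile_pen.
  destruct (piece_is_slot (n - 2) ltac:(lia)) as [m [Hfst Hsnd]].
  pose proof (proj1 x_division (n - 2)%nat ltac:(lia)) as [_ [_ H1]].
  assert (Hm : (S m <= n)%nat).
  { apply grid_le_inv. rewrite <- Hsnd, INR_n_w. exact H1. }
  unfold meas. rewrite Hfst, Hsnd, !dented_grid by lia. rewrite S_INR. ring.
Qed.

Lemma ult_player_value : util profile x (n - 1) (n - 1) = w.
Proof.
  unfold util. rewrite profile_ult, uniform_meas by (apply (proj1 x_division); lia).
  apply piece_length. lia.
Qed.

End EnvyFreeComplete.
End Instance.

Theorem theorem5 :
  forall n : nat, (2 < n)%nat ->
  exists v : nat -> R -> R,
    (forall i, (i < n)%nat -> is_valuation (v i)) /\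
    exists y : nat -> R * R,
      is_division n y /\ ~ is_complete n y /\ envy_free n v y /\
      forall x : nat -> R * R,
        is_division n x -> is_complete n x -> envy_free n v x ->
        exists S : list nat,
          NoDup S /\ length S = (n - 2)%nat /\
          (forall i, In i S -> (i < n)%nat) /\
          (forall i, In i S ->
             util v y i i = 2 * util v x i i /\ util v x i i > 0) /\
          (forall i, (i < n)%nat -> ~ In i S -> util v y i i >= util v x i i).
Proof.
  intros n Hn. assert (Hn3 : (3 <= n)%nat) by lia.
  exists (profile n). split; [intros i Hi; now apply profile_valuation|].
  exists (partial_division n).
  split; [now apply partial_division_is_division|].
  split; [now apply partial_division_incomplete|].
  split; [now apply partial_division_envy_free|].
  intros x Hdiv Hc Hef. exists (seq 0 (n - 2)).
  split; [apply seq_NoDup|]. split; [apply length_seq|].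
  split; [intros i Hi; apply in_seq in Hi; lia|]. split.
  - intros i Hi. apply in_seq in Hi.
    rewrite partial_division_spike_value, (spike_player_value n Hn3 x) by (auto; lia). lra.
  - intros i Hi Hni. assert (Hs : ~ (i < n - 2)%nat) by (intros Hs; apply Hni, in_seq; lia).
    assert (Hcases : i = (n - 2)%nat \/ i = (n - 1)%nat) by lia.
    destruct Hcases as [-> | ->].
    + rewrite partial_division_pen_value, (pen_player_value n Hn3 x) by auto. lra.
    + rewrite partial_division_ult_value, (ult_player_value n Hn3 x) by auto. lra.
Qed.
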